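(* A function $f\in\mathcal{L}(G)$ is positive semi-definite (respectively positive definite) if and only if $\hat{f}_k\ge 0$ (respectively $\hat{f}_k>0$) for all $k\in\{1,\dots,n\}$. The corresponding kernel $K_f(v_i,v_j)=(\mathbf{C}_{e_j}f)(v_i)$ has the decomposition $$K_f(v,w)=\sum_{k=1}^n\hat{f}_k\,u_k(v)\,u_k(w)\quad(v,w\in V).$$ Further: (i) $f\in\mathcal{A}_{\mathbf{L}}$ and $f$ is positive semi-definite if and only if $\hat{f}_k\ge0$ for all $k$ and $\hat{f}_k=\hat{f}_{k'}$ whenever $\lambda_k=\lambda_{k'}$; (ii) $f\in\mathcal{B}_M$ and $f$ is positive semi-definite if and only if $\hat{f}_k\ge 0$ for all $k$ and $\hat{f}_k=0$ for all $k>M$; (iii) $f$ is conditionally positive definite with respect to the subspace $\mathcal{Y}=\mathrm{span}\{u_{k_1},\dots,u_{k_K}\}$ if and only if $\hat{f}_{k_1}>0,\dots,\hat{f}_{k_K}>0$.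
   Context: Let $G$ be a graph with vertex set $V=\{v_1,\dots,v_n\}$ and a symmetric, entrywise non-negative weighted adjacency matrix $\mathbf{A}$, degree matrix $\mathbf{D}=\mathrm{diag}(\sum_k\mathbf{A}_{ik})$ (assumed positive), and normalized Laplacian $\mathbf{L}=\mathbf{I}_n-\mathbf{D}^{-1/2}\mathbf{A}\mathbf{D}^{-1/2}$. Signals $x:V\to\mathbb{R}$ are identified with vectors in $\mathbb{R}^n$ (space $\mathcal{L}(G)$), and $e_1,\dots,e_n$ is the standard basis. Fix an orthonormal eigendecomposition $\mathbf{L}=\mathbf{U}\,\mathrm{diag}(\lambda_1,\dots,\lambda_n)\mathbf{U}^\intercal$, $\lambda_1\le\dots\le\lambda_n$, with columns $u_1,\dots,u_n$ of $\mathbf{U}$. Graph Fourier transform: $\hat{x}=\mathbf{U}^\intercal x$. Convolution operator: $\mathbf{C}_x=\mathbf{U}\,\mathrm{diag}(\hat{x})\,\mathbf{U}^\intercal$. Unit $f_{\mathbb{1}}=\sum_k u_k$; $\mathcal{A}_{\mathbf{L}}=\mathrm{span}\{f_{\mathbb{1}},\mathbf{L}f_{\mathbb{1}},\dots,\mathbf{L}^{n-1}f_{\mathbb{1}}\}$; for $M\le n$, $\mathcal{B}_M=\mathrm{span}\{u_1,\dots,u_M\}$. For $f\in\mathcal{L}(G)$ let $\mathbf{K}_f\in\mathbb{R}^{n\times n}$ have entries $(\mathbf{K}_f)_{ij}=(\mathbf{C}_{e_j}f)(v_i)$. The function $f$ is called positive semi-definite (positive definite) if $\mathbf{K}_f$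 is symmetric and positive semi-definite (symmetric and strictly positive definite), and conditionally positive definite with respect to a subspace $\mathcal{Y}$ if $y^\intercal\mathbf{K}_f y>0$ for all nonzero $y\in\mathcal{Y}$. *)

(* Vertices v_1..v_n are indexed by 'I_n (0-based: v_{i+1} <-> i). *)
From mathcomp Require Import all_boot all_order all_algebra.
Set Implicit Arguments. Unset Strict Implicit. Unset Printing Implicit Defensive.
Import Order.TTheory GRing.Theory Num.Theory.
Local Open Scope ring_scope.

Section GraphFourier.
Variable R : rcfType.

Definition deg n (A : 'M[R]_n) (i : 'I_n) : R := \sum_(k < n) A i k.

Definition Dinvsqrt n (A : 'M[R]_n) : 'M[R]_n :=
  diag_mx (\row_i (Num.sqrt (deg A i))^-1).

Definition normLap n (A : 'M[R]_n) : 'M[R]_n :=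
  1%:M - Dinvsqrt A *m A *m Dinvsqrt A.

Definition gft n (U : 'M[R]_n) (x : 'cV[R]_n) : 'cV[R]_n := U^T *m x.

Definition convop n (U : 'M[R]_n) (x : 'cV[R]_n) : 'M[R]_n :=
  U *m diag_mx (gft U x)^T *m U^T.

Definition ebasis n (j : 'I_n) : 'cV[R]_n := delta_mx j 0.

Definition kernelK n (U : 'M[R]_n) (f : 'cV[R]_n) : 'M[R]_n :=
  \matrix_(i, j) (convop U (ebasis j) *m f) i 0.

Definition qform n (M : 'M[R]_n) (y : 'cV[R]_n) : R := (y^T *m M *m y) 0 0.

Definition psd_fun n (U : 'M[R]_n) (f : 'cV[R]_n) : Prop :=
  (kernelK U f)^T = kernelK U f /\ forall y : 'cV[R]_n, 0 <= qform (kernelK U f) y.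

Definition pd_fun n (U : 'M[R]_n) (f : 'cV[R]_n) : Prop :=
  (kernelK U f)^T = kernelK U f /\
  forall y : 'cV[R]_n, y != 0 -> 0 < qform (kernelK U f) y.

Definition cpd_fun n (U : 'M[R]_n) (Y : 'cV[R]_n -> Prop) (f : 'cV[R]_n) : Prop :=
  forall y, Y y -> y != 0 -> 0 < qform (kernelK U f) y.

Definition unitf n (U : 'M[R]_n) : 'cV[R]_n := \sum_(k < n) col k U.

Definition in_AL n (L U : 'M[R]_n) (f : 'cV[R]_n) : Prop :=
  exists c : 'I_n -> R, f = \sum_(i < n) c i *: (L ^+ i *m unitf U).

Definition in_span_U n (U : 'M[R]_n) (S : {set 'I_n}) (y : 'cV[R]_n) : Prop :=
  exists c : 'I_n -> R, y = \sum_(k in S) c k *: col k U.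

(* B_M = span{u_1,...,u_M}  (0-based indices k < M) *)
Definition in_BM n (U : 'M[R]_n) (M : nat) (f : 'cV[R]_n) : Prop :=
  in_span_U U [set k : 'I_n | (k < M)%N] f.

End GraphFourier.

(* Since K_f = U diag(f^) U^T, the quadratic form of K_f is
   y^T K_f y = \sum_k f^_k ((U^T y)_k)^2.  Testing it on y = u_k reads off f^_k,
   and conversely nonnegative (positive) coefficients make every such sum
   nonnegative (positive for nonzero y in the relevant span); a vector lies in
   span{u_k : k in S} iff its Fourier coefficients vanish off S.  Finally
   L^i f_1 = U (lambda_k^i)_k, so A_L consists of the U w with w_k = p(lambda_k)
   for polynomials p of degree < n, and interpolation on the distinct
   eigenvalues shows that these are exactly the w that are constant on each
   eigenvalue's level set. *)

From mathcomp Require Import all_boot all_order all_algebra.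
From mathcomp Require Import ring.
Import Order.TTheory GRing.Theory Num.Theory.
Set Implicit Arguments. Unset Strict Implicit.
Unset Printing Implicit Defensive.
Local Open Scope ring_scope.

Section LevelSetInterpolation.
Variables (R : numFieldType) (n : nat) (lam : 'I_n -> R).

Lemma poly_interp_mod (q : {poly R}) :
  exists2 r : {poly R}, (size r <= n)%N & forall k, r.[lam k] = q.[lam k].
Proof.
pose P := \prod_(j < n) ('X - (lam j)%:P).
have P_neq0 : P != 0 by apply/monic_neq0/monic_prod_XsubC.
have size_P : size P = n.+1.
  by rewrite /P -big_enum /= size_prod_XsubC -cardE card_ord.
exists (q %% P); first by rewrite -ltnS -size_P ltn_modp.
move=> k; rewrite [in RHS](divp_eq q P) hornerD hornerM.
suff -> : P.[lam k] = 0 by rewrite mulr0 add0r.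
by rewrite horner_prod (bigD1 k) //= hornerXsubC subrr mul0r.
Qed.

Lemma poly_interp_levels (v : 'I_n -> R) :
  (forall k k', lam k = lam k' -> v k = v k') ->
  exists q : {poly R}, forall k, q.[lam k] = v k.
Proof.
move=> v_lev.
pose N k := #|[pred j | lam j == lam k]|.
pose ell k := \prod_(j | lam j != lam k) ('X - (lam j)%:P).
(* Dividing by N k averages over each level set, so that no representative
   has to be chosen; this is where characteristic 0 is used. *)
exists (\sum_k (v k / (N k)%:R / (ell k).[lam k]) *: ell k) => m.
have ell_self k : (ell k).[lam k] != 0.
  rewrite horner_prod; apply/prodf_neq0 => j lev_j.
  by rewrite hornerXsubC subr_eq0 eq_sym.
have ell_other k : lam k != lam m -> (ell k).[lam m] = 0.
  move=> lev_k; rewrite horner_prod (bigD1 m) 1?eq_sym //=.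
  by rewrite hornerXsubC subrr mul0r.
have N_neq0 : (N m)%:R != 0 :> R.
  by rewrite pnatr_eq0 -lt0n; apply/card_gt0P; exists m; rewrite inE /=.
rewrite horner_sum (bigID (fun k => lam k == lam m)) /=.
rewrite [X in _ + X]big1 ?addr0 => [|k /ell_other ell0]; last first.
  by rewrite hornerZ ell0 mulr0.
rewrite (eq_bigr (fun _ => v m / (N m)%:R)) => [|k /eqP lev_k]; last first.
  rewrite hornerZ -lev_k divfK // (v_lev _ _ lev_k) /N.
  by congr (_ / _%:R); apply: eq_card => j; rewrite !inE lev_k.
by rewrite sumr_const -(mulr_natr (v m / _)) divfK.
Qed.

Lemma coef_interp_levels (v : 'I_n -> R) :
  (forall k k', lam k = lam k' -> v k = v k') ->
  exists c : 'I_n -> R, forall k, v k = \sum_(i < n) c i * lam k ^+ i.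
Proof.
move=> /poly_interp_levels[q qE]; have [r size_r rE] := poly_interp_mod q.
by exists (fun i => r`_i) => k; rewrite -qE -rE (horner_coef_wide _ size_r).
Qed.

End LevelSetInterpolation.

Lemma wsum_sqr_gt0 (R : realDomainType) (I : finType) (d z : I -> R) :
  (forall k, z k != 0 -> 0 < d k) -> (exists k, z k != 0) ->
  0 < \sum_k d k * z k ^+ 2.
Proof.
move=> d_pos [k zk_neq0]; rewrite (bigD1 k) //=.
apply: ltr_pwDl; first by rewrite mulr_gt0 ?d_pos // exprn_even_gt0.
apply: sumr_ge0 => j _; have [-> | /d_pos/ltW dj_ge0] := eqVneq (z j) 0.
  by rewrite expr0n mulr0.
by rewrite mulr_ge0 ?sqr_ge0.
Qed.

Section OrthogonalEigenbasis.
Variables (R : rcfType) (n : nat) (U : 'M[R]_n).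
Hypothesis U_orth : U^T *m U = 1%:M.

Lemma orth_mulmx_tr : U *m U^T = 1%:M.
Proof. exact: mulmx1C. Qed.

Lemma gftK (f : 'cV[R]_n) : U *m gft U f = f.
Proof. by rewrite /gft mulmxA orth_mulmx_tr mul1mx. Qed.

Lemma gft_inj : injective (gft U).
Proof. exact: can_inj gftK. Qed.

Lemma gft_mulU (w : 'cV[R]_n) : gft U (U *m w) = w.
Proof. by rewrite /gft mulmxA U_orth mul1mx. Qed.

Lemma gft_col k : gft U (col k U) = delta_mx k 0.
Proof. by rewrite colE gft_mulU. Qed.

Lemma gft_eq0 (y : 'cV[R]_n) : (gft U y == 0) = (y == 0).
Proof. by rewrite -[y == 0](inj_eq gft_inj) [gft U 0]/gft mulmx0. Qed.

Lemma col_orth_neq0 k : col k U != 0.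
Proof.
rewrite -gft_eq0 gft_col; apply/eqP => /matrixP/(_ k 0).
by rewrite !mxE !eqxx => /eqP; rewrite oner_eq0.
Qed.

Lemma kernelK_entry f i j :
  kernelK U f i j = \sum_(k < n) gft U f k 0 * U i k * U j k.
Proof.
rewrite /kernelK /convop /gft mxE -!mulmxA mxE; apply: eq_bigr => k _.
by rewrite mul_diag_mx -colE !mxE /ebasis; ring.
Qed.

Lemma kernelKE f : kernelK U f = U *m diag_mx (gft U f)^T *m U^T.
Proof.
apply/matrixP => i j; rewrite kernelK_entry mxE; apply: eq_bigr => k _.
by rewrite mul_mx_diag !mxE [U i k * _]mulrC.
Qed.

Lemma tr_kernelK f : (kernelK U f)^T = kernelK U f.
Proof. by rewrite kernelKE !trmx_mul trmxK tr_diag_mx mulmxA. Qed.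

Lemma qform_kernelK f y :
  qform (kernelK U f) y = \sum_(k < n) gft U f k 0 * gft U y k 0 ^+ 2.
Proof.
rewrite /qform kernelKE.
have -> : y^T *m (U *m diag_mx (gft U f)^T *m U^T) *m y
          = (gft U y)^T *m diag_mx (gft U f)^T *m gft U y.
  by rewrite /gft !trmx_mul !trmxK !mulmxA.
rewrite mxE; apply: eq_bigr => k _.
by rewrite mul_mx_diag !mxE expr2 mulrAC mulrC.
Qed.

Lemma qform_kernelK_col f k : qform (kernelK U f) (col k U) = gft U f k 0.
Proof.
rewrite qform_kernelK gft_col (bigD1 k) //= big1 => [|j /negbTE jk].
  by rewrite !mxE !eqxx expr1n mulr1 addr0.
by rewrite !mxE jk expr0n mulr0.
Qed.

Lemma gft_span (S : {set 'I_n}) (c : 'I_n -> R) m :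
  gft U (\sum_(k in S) c k *: col k U) m 0 = if m \in S then c m else 0.
Proof.
rewrite /gft mulmx_sumr summxE.
under eq_bigr => k _ do
  rewrite -scalemxAr -/(gft U _) gft_col !mxE andbT mulr_natr mulrb.
case: ifP => Sm.
  rewrite (bigD1 m) //= eqxx big1 ?addr0 // => k /andP[_ /negbTE].
  by rewrite eq_sym => ->.
by rewrite big1 // => k Sk; case: eqP => // mk; rewrite mk Sk in Sm.
Qed.

Lemma in_span_UP (S : {set 'I_n}) y :
  in_span_U U S y <-> forall k, k \notin S -> gft U y k 0 = 0.
Proof.
split=> [[c ->] k kS | yS]; first by rewrite gft_span (negbTE kS).
exists (fun k => gft U y k 0); apply: gft_inj; apply/matrixP => k j.
by rewrite (ord1 j) gft_span; case: ifPn => // /yS.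
Qed.

Lemma psd_funP f : psd_fun U f <-> forall k, 0 <= gft U f k 0.
Proof.
split=> [[_ ge0] k | ge0]; first by rewrite -qform_kernelK_col.
split=> [|y]; first exact: tr_kernelK.
by rewrite qform_kernelK; apply: sumr_ge0 => k _; rewrite mulr_ge0 ?sqr_ge0.
Qed.

Lemma cpd_funP (S : {set 'I_n}) f :
  cpd_fun U (in_span_U U S) f <-> forall k, k \in S -> 0 < gft U f k 0.
Proof.
split=> [pos k Sk | pos y /in_span_UP yS y0].
  rewrite -qform_kernelK_col; apply: pos (col_orth_neq0 k).
  apply/in_span_UP => j jS; rewrite gft_col !mxE andbT.
  by case: eqP jS => // ->; rewrite Sk.
rewrite qform_kernelK; apply: wsum_sqr_gt0 => [k yk | ].
  by apply: pos; apply: contraNT yk => /yS ->.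
rewrite -gft_eq0 in y0; have [k [j yk]] := matrix0Pn _ y0.
by exists k; rewrite -(ord1 j).
Qed.

Lemma pd_funP f : pd_fun U f <-> forall k, 0 < gft U f k 0.
Proof.
have span_setT y : in_span_U U setT y by apply/in_span_UP => k; rewrite inE.
split=> [[_ pos] | pos].
  by move=> k; apply: (cpd_funP setT f).1 (in_setT k) => y _; apply: pos.
split=> [|y]; first exact: tr_kernelK.
by apply: (cpd_funP setT f).2 (span_setT y) => k _.
Qed.

Section Krylov.
Variables (L : 'M[R]_n) (lambda : 'I_n -> R).
Hypothesis L_eig : L = U *m diag_mx (\row_k lambda k) *m U^T.

Lemma mulmx_L_U w : L *m (U *m w) = U *m \col_k (lambda k * w k 0).
Proof.
rewrite L_eig -!mulmxA [U^T *m _]mulmxA U_orth mul1mx mul_diag_mx.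
by congr (_ *m _); apply/matrixP => k j; rewrite (ord1 j) !mxE.
Qed.

Lemma mulmx_Lpow_U i w :
  L ^+ i *m (U *m w) = U *m \col_k (lambda k ^+ i * w k 0).
Proof.
elim: i => [|i IHi]; last first.
  rewrite exprS -mulmxE -mulmxA IHi mulmx_L_U; congr (_ *m _).
  by apply/matrixP => k j; rewrite (ord1 j) !mxE exprS mulrA.
rewrite expr0 -idmxE mul1mx; congr (_ *m _).
by apply/matrixP => k j; rewrite (ord1 j) !mxE mul1r.
Qed.

Lemma unitfE : unitf U = U *m const_mx 1.
Proof.
apply/matrixP => i j; rewrite (ord1 j) /unitf summxE mxE.
by apply: eq_bigr => k _; rewrite !mxE mulr1.
Qed.

Lemma Krylov_combE (c : 'I_n -> R) :
  \sum_(i < n) c i *: (L ^+ i *m unitf U)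
  = U *m \col_k (\sum_(i < n) c i * lambda k ^+ i).
Proof.
under eq_bigr => i _ do rewrite unitfE mulmx_Lpow_U scalemxAr.
rewrite -mulmx_sumr; congr (_ *m _); apply/matrixP => k j.
by rewrite (ord1 j) summxE !mxE; apply: eq_bigr => i _; rewrite !mxE mulr1.
Qed.

Lemma in_ALP f :
  in_AL L U f <->
  forall k k', lambda k = lambda k' -> gft U f k 0 = gft U f k' 0.
Proof.
split=> [[c ->] k k' lam_kk' | /coef_interp_levels[c cE]].
  by rewrite Krylov_combE gft_mulU !mxE lam_kk'.
exists c; apply: gft_inj; rewrite Krylov_combE gft_mulU.
by apply/matrixP => k j; rewrite (ord1 j) [RHS]mxE -cE.
Qed.

End Krylov.
End OrthogonalEigenbasis.

Theorem theorem1 (R : rcfType) (n : nat) (A : 'M[R]_n)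
  (A_sym : A^T = A) (A_nonneg : forall i j, 0 <= A i j)
  (deg_pos : forall i, 0 < deg A i)
  (U : 'M[R]_n) (lambda : 'I_n -> R)
  (U_orth : U^T *m U = 1%:M)
  (lambda_sorted : forall i j : 'I_n, (i <= j)%N -> lambda i <= lambda j)
  (L_eig : normLap A = U *m diag_mx (\row_k lambda k) *m U^T) :
  forall f : 'cV[R]_n,
    (psd_fun U f <-> forall k, 0 <= gft U f k 0) /\
    (pd_fun U f <-> forall k, 0 < gft U f k 0) /\
    (forall i j, kernelK U f i j = \sum_(k < n) gft U f k 0 * U i k * U j k) /\
    (in_AL (normLap A) U f /\ psd_fun U f <->
       (forall k, 0 <= gft U f k 0) /\
       (forall k k', lambda k = lambda k' -> gft U f k 0 = gft U f k' 0)) /\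
    (forall M : nat, (M <= n)%N ->
       (in_BM U M f /\ psd_fun U f <->
         (forall k, 0 <= gft U f k 0) /\
         (forall k : 'I_n, (M <= k)%N -> gft U f k 0 = 0))) /\
    (forall S : {set 'I_n},
       cpd_fun U (in_span_U U S) f <-> forall k, k \in S -> 0 < gft U f k 0).
Proof.
move=> f; have psdP := psd_funP U_orth f; have ALP := in_ALP U_orth L_eig f.
split; first exact: psdP.
split; first exact: pd_funP.
split; first exact: kernelK_entry.
split; first by rewrite ALP psdP; tauto.
split; last by move=> S; apply: cpd_funP.
move=> M _; rewrite /in_BM (in_span_UP U_orth) psdP.
have notin_BM k : (k \notin [set j : 'I_n | (j < M)%N]) = (M <= k)%N.
  by rewrite inE -leqNgt.
by setoid_rewrite notin_BM; tauto.
Qed.
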